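(* Let $f$ be analytic on $\mathbb{D}$ and suppose there is a constant $c\ge 0$ with $\operatorname{Diam} f(r\mathbb{D})=cr$ for all $0<r<1$. Then $f(z)=a+bz$ for some constants $a,b\in\mathbb{C}$.
   Context: $\mathbb{D}$ is the open unit disk, $r\mathbb{D}=\{|z|<r\}$; for a set $E\subset\mathbb{C}$, $\operatorname{Diam}E=\sup_{z,w\in E}|z-w|$. *)

From Stdlib Require Import Reals.
From Coquelicot Require Import Coquelicot.
Open Scope R_scope.

Definition analytic_at (f : C -> C) (z0 : C) : Prop :=
  exists (a : nat -> C) (rho : R), 0 < rho /\
    forall z : C, Cmod (z - z0)%C < rho ->
      is_series (fun n : nat => (a n * pow_n (z - z0)%C n)%C) (f z).

Definition analytic_on_disk (f : C -> C) : Prop :=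
  forall z0 : C, Cmod z0 < 1 -> analytic_at f z0.

Definition diam_image_disk (f : C -> C) (r : R) : Rbar :=
  Lub_Rbar (fun d : R => exists z w : C,
    Cmod z < r /\ Cmod w < r /\ d = Cmod (f z - f w)%C).

From Stdlib Require Import Reals Lra Lia Psatz Classical.
From Coquelicot Require Import Coquelicot.
Open Scope R_scope.

(* Write f(z) = sum a_n z^n near 0. Comparing f(z) - f(w) with a_1 (z - w) on small discs
   gives c <= 2 |a_1|, and f is constant if a_1 = 0. Otherwise, if a_m (m >= 2) were the first
   nonzero higher coefficient, one could pick z, w of modulus s with |f(z) - f(w)| > 2 |a_1| s
   for small s: for odd m take w = -z with z rotated so that a_m z^m points along a_1 z; for
   even m rotate z and -z in opposite senses by an angle of order s^(m-1). Hence f is affine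
   near 0, and by continuation along rays on the whole disc. *)

Lemma Rle_of_le_linear_small (A B K d : R) :
  0 < d -> (forall s, 0 < s <= d -> A <= B + K * s) -> A <= B.
Proof.
  intros Hd H. apply le_epsilon. intros eps Heps.
  set (s := Rmin d (eps / (Rabs K + 1))).
  assert (Hs : 0 < s) by (apply Rmin_pos; [lra | apply Rdiv_lt_0_compat; pose proof (Rabs_pos K); lra]).
  assert (HsK : (Rabs K + 1) * s <= eps).
  { assert (Hle : s <= eps / (Rabs K + 1)) by apply Rmin_r.
    pose proof (Rabs_pos K).
    apply (Rmult_le_compat_l (Rabs K + 1)) in Hle; [|lra].
    replace ((Rabs K + 1) * (eps / (Rabs K + 1))) with eps in Hle by (field; lra). lra. }
  specialize (H s (conj Hs (Rmin_l _ _))).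
  pose proof (Rle_abs K). pose proof (Rabs_pos K). nra.
Qed.

Lemma Rdiv_le_half (s r : R) : 0 < r -> 0 <= s <= r / 2 -> 0 <= s / r <= / 2.
Proof.
  intros Hr Hs. split; [apply Rdiv_le_0_compat; lra|].
  apply (Rmult_le_reg_l r); [lra|]. field_simplify; lra.
Qed.

Lemma Rle_Rmin_inv (s b x : R) : 0 < x -> s <= Rmin b (/ x) -> s <= b /\ s * x <= 1.
Proof.
  intros Hx Hs. pose proof (Rmin_l b (/ x)). pose proof (Rmin_r b (/ x)). split; [lra|].
  apply (Rmult_le_reg_r (/ x)); [apply Rinv_0_lt_compat; lra|].
  replace (s * x * / x) with s by (field; lra). lra.
Qed.

Lemma pow_n_Cpow (z : C) n : @pow_n C_Ring z n = Cpow z n.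
Proof. induction n; simpl; auto. Qed.

(* [fsum x N] is [x 0 + ... + x (N-1)]; unlike [sum_n] it has an empty case and unfolds by [cbn]. *)
Fixpoint fsum (x : nat -> C) (N : nat) : C :=
  match N with O => 0%C | S N' => (fsum x N' + x N')%C end.

Lemma sum_n_fsum (x : nat -> C) n : @sum_n C_AbelianMonoid x n = fsum x (S n).
Proof.
  induction n.
  - rewrite sum_O. simpl. rewrite Cplus_0_l. reflexivity.
  - rewrite sum_Sn, IHn. reflexivity.
Qed.

Lemma fsum_eq0 (x : nat -> C) N : (forall k, (k < N)%nat -> x k = 0%C) -> fsum x N = 0%C.
Proof.
  induction N; intros H; simpl; auto.
  rewrite IHN by (intros; apply H; lia). rewrite H by lia. apply Cplus_0_l.
Qed.

Lemma fsum_sparse (x : nat -> C) m : (2 <= m)%nat ->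
  (forall j, (j < m)%nat -> j <> 1%nat -> x j = 0%C) -> fsum x (S m) = (x 1%nat + x m)%C.
Proof.
  intros Hm H. cbn [fsum]. f_equal.
  replace m with (2 + (m - 2))%nat in H |- * by lia.
  induction (m - 2)%nat as [|p IH].
  - simpl. rewrite (H 0%nat) by lia. ring.
  - rewrite Nat.add_succ_r. cbn [fsum]. rewrite IH by (intros; apply H; lia).
    rewrite (H (2 + p)%nat) by lia. apply Cplus_0_r.
Qed.

Definition trunc (x : nat -> C) N := fun n => if (n <? N)%nat then x n else 0%C.

Lemma is_series_trunc (x : nat -> C) N :
  is_series (V:=C_NormedModule) (trunc x N) (fsum x N).
Proof.
  assert (E : forall n, fsum (trunc x N) n = fsum x (Nat.min n N)).
  { induction n.
    - rewrite Nat.min_0_l. reflexivity.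
    - cbn [fsum]. rewrite IHn. unfold trunc. destruct (Nat.ltb_spec n N).
      + replace (Nat.min (S n) N) with (S (Nat.min n N)) by lia.
        replace (Nat.min n N) with n by lia. reflexivity.
      + replace (Nat.min (S n) N) with (Nat.min n N) by lia. apply Cplus_0_r. }
  apply filterlim_ext_loc with (fun _ => fsum x N).
  - exists N. intros n Hn. rewrite sum_n_fsum, E. f_equal. lia.
  - apply filterlim_const.
Qed.

Lemma is_series_finite (x : nat -> C) N (X : C) :
  (forall n, (N <= n)%nat -> x n = 0%C) ->
  is_series (V:=C_NormedModule) x X -> X = fsum x N.
Proof.
  intros Hz Hx.
  apply (filterlim_locally_unique (K:=C_AbsRing) (V:=C_NormedModule) (F:=eventually)
    (@sum_n C_AbelianMonoid x)); [exact Hx|].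
  apply (is_series_ext (trunc x N)); [|apply is_series_trunc].
  intro n. unfold trunc. destruct (Nat.ltb_spec n N); auto. symmetry. apply Hz. lia.
Qed.

Lemma Cmod_series_le (x : nat -> C) (y : nat -> R) (X : C) (Y : R) :
  is_series (V:=C_NormedModule) x X -> is_series (V:=R_NormedModule) y Y ->
  (forall n, Cmod (x n) <= y n) -> Cmod X <= Y.
Proof.
  intros Hx Hy Hb.
  assert (Hs : forall n, Cmod (sum_n x n) <= sum_n y n).
  { intro n. eapply Rle_trans.
    - apply (norm_sum_n_m (K:=C_AbsRing) (V:=C_NormedModule) x 0 n).
    - apply sum_n_m_le. intros; apply Hb. }
  apply (is_lim_seq_le _ _ (Cmod X) Y Hs); [|exact Hy].
  apply (filterlim_comp _ _ _ _ (@norm C_AbsRing C_NormedModule) _ _ _ Hx).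
  apply (filterlim_norm (K:=C_AbsRing) (V:=C_NormedModule) X).
Qed.

Lemma Cmod_series_tail_le (x : nat -> C) (X : C) m K th :
  0 <= K -> 0 <= th <= /2 -> is_series (V:=C_NormedModule) x X ->
  (forall n, (m <= n)%nat -> Cmod (x n) <= K * th ^ n) ->
  Cmod (X - fsum x m) <= 2 * K * th ^ m.
Proof.
  intros HK Hth Hx Hb.
  set (t := fun k => (x (m + k)%nat)).
  assert (Ht : is_series (V:=C_NormedModule) t (X - fsum x m)%C).
  { destruct m as [|m'].
    - replace (X - fsum x 0)%C with X by (simpl; ring). exact Hx.
    - apply is_series_incr_n; [lia|]. rewrite sum_n_fsum.
      match goal with |- is_series _ ?l => replace l with X; [exact Hx|] end.
      change (X = X - fsum x (S m') + fsum x (S m'))%C. ring. }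
  assert (Hg : is_series (V:=R_NormedModule) (fun k => K * th ^ m * th ^ k) (K * th ^ m * / (1 - th))).
  { apply (is_series_scal (K:=R_AbsRing) (V:=R_NormedModule) (K * th ^ m) (fun k => th ^ k)).
    apply is_series_geom. rewrite Rabs_pos_eq; lra. }
  eapply Rle_trans.
  - apply (Cmod_series_le _ _ _ _ Ht Hg).
    intro n. unfold t. rewrite Rmult_assoc, <- pow_add. apply Hb. lia.
  - assert (/ (1 - th) <= 2).
    { apply (Rmult_le_reg_l (1 - th)); [lra|]. rewrite Rinv_r by lra. lra. }
    assert (0 <= K * th ^ m) by (apply Rmult_le_pos; auto; apply pow_le; lra).
    nra.
Qed.

Lemma Cmod_mult_pow (c z : C) n : Cmod (c * Cpow z n) = Cmod c * Cmod z ^ n.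
Proof. rewrite Cmod_mult, Cmod_pow. reflexivity. Qed.

Lemma power_series_coef_bounded (c : nat -> C) (r : R) (L : C) :
  0 < r -> is_series (V:=C_NormedModule) (fun n => c n * Cpow (RtoC r) n)%C L ->
  exists B, 0 <= B /\ forall n, Cmod (c n) * r ^ n <= B.
Proof.
  intros Hr Hs.
  set (x := fun n => (c n * Cpow (RtoC r) n)%C).
  destruct (filterlim_bounded (K:=C_AbsRing) (V:=C_NormedModule) (sum_n x)) as [M HM].
  { exists L. exact Hs. }
  assert (HF : forall n, Cmod (fsum x (S n)) <= M).
  { intro n. rewrite <- sum_n_fsum. exact (HM n). }
  assert (Hterm : forall n, Cmod (x n) <= 2 * M).
  { intros [|n].
    - pose proof (HF 0%nat) as h. simpl in h. rewrite Cplus_0_l in h.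
      pose proof (Cmod_ge_0 (x 0%nat)). lra.
    - replace (x (S n)) with (fsum x (S (S n)) + - fsum x (S n))%C by (cbn [fsum]; ring).
      eapply Rle_trans; [apply Cmod_triangle|].
      rewrite Cmod_opp. pose proof (HF (S n)). pose proof (HF n). lra. }
  exists (2 * M). split.
  - pose proof (Hterm 0%nat). pose proof (Cmod_ge_0 (x 0%nat)). lra.
  - intro n. specialize (Hterm n). unfold x in Hterm.
    rewrite Cmod_mult_pow, Cmod_R, Rabs_pos_eq in Hterm by lra. exact Hterm.
Qed.

Section PowerSeriesRemainder.

Variables (c : nat -> C) (r B : R).
Hypotheses (Hr : 0 < r) (HB : 0 <= B) (Hc : forall n, Cmod (c n) * r ^ n <= B).

Lemma power_series_term_le (t : R) n : 0 <= t -> Cmod (c n) * (t * r) ^ n <= B * t ^ n.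
Proof.
  intro Ht. rewrite Rpow_mult_distr.
  pose proof (pow_le t n Ht). pose proof (Cmod_ge_0 (c n)). pose proof (Hc n). nra.
Qed.

Lemma power_series_remainder (z X : C) m :
  Cmod z <= r / 2 -> is_series (V:=C_NormedModule) (fun n => c n * Cpow z n)%C X ->
  Cmod (X - fsum (fun n => c n * Cpow z n)%C m) <= 2 * B * (Cmod z / r) ^ m.
Proof.
  intros Hz Hx. pose proof (Cmod_ge_0 z).
  apply Cmod_series_tail_le; auto.
  - apply Rdiv_le_half; lra.
  - intros n _. rewrite Cmod_mult_pow.
    replace (Cmod z) with ((Cmod z / r) * r) at 1 by (field; lra).
    apply power_series_term_le. apply Rdiv_le_0_compat; lra.
Qed.

End PowerSeriesRemainder.

Lemma power_series_eq0_coef (c : nat -> C) eps : 0 < eps ->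
  (forall s, 0 < s < eps -> is_series (V:=C_NormedModule) (fun n => c n * Cpow (RtoC s) n)%C (RtoC 0)) ->
  forall n, c n = 0%C.
Proof.
  intros He Hs.
  set (r := eps / 2).
  assert (Hr : 0 < r) by (unfold r; lra).
  destruct (power_series_coef_bounded c r _ Hr (Hs r ltac:(unfold r; lra))) as [B [HB Hb]].
  intro n. induction n as [n IH] using (well_founded_induction Wf_nat.lt_wf).
  apply Cmod_eq_0. apply Rle_antisym; [|apply Cmod_ge_0].
  apply (Rle_of_le_linear_small _ 0 (2 * B / r ^ S n) (r / 2)); [lra|].
  intros s Hs'.
  assert (Hrem := power_series_remainder c r B Hr HB Hb (RtoC s) 0%C (S n)).
  rewrite Cmod_R, Rabs_pos_eq in Hrem by lra.
  specialize (Hrem ltac:(lra) (Hs s ltac:(unfold r in *; lra))).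
  cbn [fsum] in Hrem. rewrite fsum_eq0 in Hrem by (intros k Hk; rewrite IH by lia; ring).
  replace (0 - (0 + c n * Cpow (RtoC s) n))%C with (- (c n * Cpow (RtoC s) n))%C in Hrem by ring.
  rewrite Cmod_opp, Cmod_mult_pow, Cmod_R, Rabs_pos_eq in Hrem by lra.
  assert (Hsn : 0 < s ^ n) by (apply pow_lt; lra).
  apply (Rmult_le_reg_r (s ^ n)); auto.
  rewrite Rplus_0_l.
  replace (2 * B / r ^ S n * s * s ^ n) with (2 * B * (s / r) ^ S n)
    by (unfold Rdiv; rewrite Rpow_mult_distr, pow_inv; simpl; field; split; [apply pow_nonzero|]; lra).
  exact Hrem.
Qed.

Lemma power_series_affine_coef (c : nat -> C) eps p q : 0 < eps ->
  (forall s, 0 < s < eps ->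
    is_series (V:=C_NormedModule) (fun n => c n * Cpow (RtoC s) n)%C (p + q * RtoC s)%C) ->
  c 0%nat = p /\ c 1%nat = q /\ forall n, (2 <= n)%nat -> c n = 0%C.
Proof.
  intros He Hs.
  set (d := fun n => match n with 0%nat => p | 1%nat => q | _ => 0%C end).
  assert (E : forall n, c n = d n).
  { intro n. apply Ceq_minus. revert n.
    apply (power_series_eq0_coef _ eps He). intros s Hs'.
    pose proof (is_series_minus _ _ _ _ (Hs s Hs')
      (is_series_trunc (fun n => d n * Cpow (RtoC s) n)%C 2)) as H.
    match type of H with is_series _ ?l => replace (RtoC 0) with l end.
    2:{ simpl. change (p + q * s + - (0 + p * 1 + q * (s * 1)) = 0)%C. ring. }
    eapply is_series_ext; [|exact H]. intro n. unfold trunc.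
    change ((c n * Cpow s n) + - (if (n <? 2)%nat then d n * Cpow s n else 0)
      = (c n - d n) * Cpow s n)%C.
    destruct (Nat.ltb_spec n 2).
    + ring.
    + destruct n as [|[|n]]; try lia. simpl. ring. }
  split; [|split]; try apply E.
  intros n Hn. rewrite E. destruct n as [|[|n]]; try lia. reflexivity.
Qed.

Lemma sin_ge_cubic x : 0 <= x <= 1 -> x - x ^ 3 / 6 <= sin x.
Proof.
  intro H. pose proof PI2_1.
  destruct (sin_bound x 0 ltac:(lra) ltac:(lra)) as [h _].
  unfold sin_approx, sin_term in h. simpl in h. lra.
Qed.

Lemma cos_ge_quadratic x : -1 <= x <= 1 -> 1 - x ^ 2 / 2 <= cos x.
Proof.
  intro H. pose proof PI2_1.
  destruct (cos_bound x 0 ltac:(lra) ltac:(lra)) as [h _].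
  unfold cos_approx, cos_term in h. simpl in h. lra.
Qed.

Lemma Rabs_sin_le x : Rabs (sin x) <= Rabs x.
Proof.
  assert (P : forall y, 0 <= y -> Rabs (sin y) <= y).
  { intros y Hy. destruct (Rle_lt_dec y 1).
    - pose proof PI2_1. assert (0 <= sin y) by (apply sin_ge_0; lra).
      rewrite Rabs_pos_eq by lra. destruct (Req_dec y 0) as [->|].
      + rewrite sin_0. lra.
      + left. apply sin_lt_x. lra.
    - pose proof (SIN_bound y). apply Rabs_le_between. lra. }
  destruct (Rle_lt_dec 0 x).
  - rewrite (Rabs_pos_eq x) by lra. auto.
  - rewrite (Rabs_left x) by lra. replace (sin x) with (- sin (- x)) by (rewrite sin_neg; ring).
    rewrite Rabs_Ropp. apply P. lra.
Qed.

Definition cis (t : R) : C := (cos t, sin t).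

Lemma cis_add a b : cis (a + b) = (cis a * cis b)%C.
Proof. unfold cis, Cmult. simpl. rewrite cos_plus, sin_plus. f_equal; ring. Qed.

Lemma Cpow_cis a n : Cpow (cis a) n = cis (INR n * a).
Proof.
  induction n.
  - unfold cis. simpl. rewrite Rmult_0_l, cos_0, sin_0. reflexivity.
  - rewrite Cpow_S, IHn, <- cis_add, S_INR. f_equal. ring.
Qed.

Lemma Cmod_cis a : Cmod (cis a) = 1.
Proof.
  unfold Cmod, cis. simpl. pose proof (sin2_cos2 a) as H. unfold Rsqr in H.
  replace (cos a * (cos a * 1) + sin a * (sin a * 1)) with 1 by lra. apply sqrt_1.
Qed.

Lemma cis_sub_cis_opp a : (cis a - cis (- a))%C = (Ci * RtoC (2 * sin a))%C.
Proof.
  unfold cis, Ci, RtoC, Cminus, Cplus, Copp, Cmult. simpl. rewrite cos_neg, sin_neg. f_equal; ring.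
Qed.

Lemma cis_add_cis_opp a : (cis a + cis (- a))%C = RtoC (2 * cos a).
Proof. unfold cis, Cplus, RtoC. simpl. rewrite cos_neg, sin_neg. f_equal; ring. Qed.

Lemma Cmod_eq1_cis v : Cmod v = 1 -> exists a, v = cis a.
Proof.
  destruct v as [x y]. unfold Cmod. simpl. intro H.
  assert (H2 : x * x + y * y = 1).
  { assert (Hnn : 0 <= x * (x * 1) + y * (y * 1)) by nra.
    pose proof (sqrt_sqrt _ Hnn) as E. rewrite H in E. nra. }
  assert (Hx : -1 <= x <= 1) by nra.
  assert (Hs : sqrt (1 - x²) = Rabs y).
  { rewrite <- sqrt_Rsqr_abs. f_equal. unfold Rsqr. lra. }
  destruct (Rle_lt_dec 0 y).
  - exists (acos x). unfold cis. rewrite cos_acos, sin_acos, Hs, Rabs_pos_eq by auto. reflexivity.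
  - exists (- acos x). unfold cis. rewrite cos_neg, sin_neg, cos_acos, sin_acos, Hs, Rabs_left by auto.
    f_equal. ring.
Qed.

Lemma root_of_unit v k : Cmod v = 1 -> (0 < k)%nat -> exists u, Cmod u = 1 /\ Cpow u k = v.
Proof.
  intros Hv Hk. destruct (Cmod_eq1_cis v Hv) as [a ->].
  exists (cis (a / INR k)). split; [apply Cmod_cis|].
  rewrite Cpow_cis. f_equal. field. apply not_0_INR. lia.
Qed.

Lemma Cpow_opp_even z k : Cpow (- z) (2 * k) = Cpow z (2 * k).
Proof. rewrite !Cpow_mult_r. f_equal. simpl. ring. Qed.

Lemma Cpow_opp_odd z k : Cpow (- z) (2 * k + 1) = (- Cpow z (2 * k + 1))%C.
Proof. rewrite !Cpow_add_r, Cpow_opp_even. simpl. ring. Qed.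

Lemma pow_succ_le_self (s : R) n : 0 <= s <= 1 -> s ^ S n <= s.
Proof.
  intro Hs. rewrite <- tech_pow_Rmult.
  assert (s ^ n <= 1) by (rewrite <- (pow1 n); apply pow_incr; lra).
  pose proof (pow_le s n ltac:(lra)). nra.
Qed.

Lemma INR_le_pow2 n : INR n <= 2 ^ n.
Proof.
  induction n; [simpl; lra|].
  rewrite S_INR. simpl. assert (1 <= 2 ^ n) by (apply pow_R1_Rle; lra). lra.
Qed.

Lemma exists_unit_aligning (p q : C) k : p <> 0%C -> q <> 0%C -> (0 < k)%nat ->
  exists u, Cmod u = 1 /\ (q * Cpow u k = RtoC (Cmod q / Cmod p) * p)%C.
Proof.
  intros Hp Hq Hk.
  assert (Pp : 0 < Cmod p) by (apply Cmod_gt_0; auto).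
  assert (Pq : 0 < Cmod q) by (apply Cmod_gt_0; auto).
  set (v := (RtoC (Cmod q / Cmod p) * p / q)%C).
  assert (Hv : Cmod v = 1).
  { unfold v. rewrite Cmod_div, Cmod_mult, Cmod_R, Rabs_pos_eq by (auto; apply Rdiv_le_0_compat; lra).
    field. lra. }
  destruct (root_of_unit v k Hv Hk) as [u [Hu Huk]].
  exists u. split; auto. rewrite Huk. unfold v. field. auto.
Qed.

Lemma cos_add_mul_sin_ge (M phi : R) : 2 <= M -> 0 <= phi -> M * phi <= 1 ->
  1 + phi ^ 2 <= cos phi + phi * sin (M * phi).
Proof.
  intros HM Hphi H.
  assert (Hc : 1 - phi ^ 2 / 2 <= cos phi) by (apply cos_ge_quadratic; nra).
  assert (Hs : M * phi - (M * phi) ^ 3 / 6 <= sin (M * phi)) by (apply sin_ge_cubic; nra).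
  assert (Ht : (M * phi) ^ 3 <= M * phi).
  { assert (0 <= M * phi) by nra. assert ((M * phi) ^ 2 <= 1) by nra. nra. }
  nra.
Qed.

Lemma Cpow_cis_sub_even (s phi : R) (u : C) i :
  (Cpow (RtoC s * u * cis phi) (2 * i) - Cpow (- (RtoC s * u * cis (- phi))) (2 * i))%C =
  (RtoC (s ^ (2 * i)) * Cpow u (2 * i) * (Ci * RtoC (2 * sin (INR (2 * i) * phi))))%C.
Proof.
  rewrite Cpow_opp_even, !Cpow_mult_l, !Cpow_cis, <- RtoC_pow.
  replace (INR (2 * i) * - phi) with (- (INR (2 * i) * phi)) by ring.
  rewrite <- cis_sub_cis_opp. ring.
Qed.

Lemma odd_pair_leading_terms (a1 am u : C) (s lam : R) k :
  (am * Cpow u (2 * k) = RtoC lam * a1)%C ->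
  (a1 * Cpow (RtoC s * u) 1 - a1 * Cpow (- (RtoC s * u)) 1
    + (am * Cpow (RtoC s * u) (2 * k + 1) - am * Cpow (- (RtoC s * u)) (2 * k + 1)))%C
  = (RtoC (2 * s * (1 + lam * s ^ (2 * k))) * (a1 * u))%C.
Proof.
  intro Halign.
  rewrite Cpow_opp_odd, !Cpow_1_r, Cpow_mult_l, <- RtoC_pow, Cpow_add_r, Cpow_1_r.
  transitivity (RtoC 2 * RtoC s * u * a1
    + RtoC 2 * RtoC (s ^ (2 * k + 1)) * u * (am * Cpow u (2 * k)))%C.
  { ring. }
  rewrite Halign, pow_add, pow_1. repeat (rewrite RtoC_mult || rewrite RtoC_plus). ring.
Qed.

Lemma even_pair_leading_terms (a1 am u : C) (s phi lam : R) k : (1 <= k)%nat ->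
  (Ci * am * Cpow u (2 * k - 1) = RtoC lam * a1)%C ->
  (a1 * Cpow (RtoC s * u * cis phi) 1 - a1 * Cpow (- (RtoC s * u * cis (- phi))) 1
    + (am * Cpow (RtoC s * u * cis phi) (2 * k) - am * Cpow (- (RtoC s * u * cis (- phi))) (2 * k)))%C
  = (RtoC (2 * s * (cos phi + lam * s ^ (2 * k - 1) * sin (INR (2 * k) * phi))) * (a1 * u))%C.
Proof.
  intros Hk Halign.
  replace (am * Cpow (RtoC s * u * cis phi) (2 * k) - am * Cpow (- (RtoC s * u * cis (- phi))) (2 * k))%C
    with (am * (Cpow (RtoC s * u * cis phi) (2 * k) - Cpow (- (RtoC s * u * cis (- phi))) (2 * k)))%C
    by ring.
  rewrite Cpow_cis_sub_even, !Cpow_1_r.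
  replace (2 * k)%nat with (S (2 * k - 1)) at 1 2 by lia.
  rewrite Cpow_S, <- tech_pow_Rmult.
  transitivity (RtoC s * u * a1 * (cis phi + cis (- phi))
    + RtoC (s * s ^ (2 * k - 1)) * u * RtoC (2 * sin (INR (2 * k) * phi))
      * (Ci * am * Cpow u (2 * k - 1)))%C.
  { ring. }
  rewrite cis_add_cis_opp, Halign.
  repeat (rewrite RtoC_mult || rewrite RtoC_plus). ring.
Qed.

Lemma coef_le_of_leading_gain (A1 Am lam c g s P t E : R) :
  0 < s -> 0 < P -> 0 < t -> c <= 2 * A1 -> lam * A1 = Am -> 0 <= A1 ->
  1 + t * (lam * P) <= g -> 2 * s * g * A1 <= c * s + 2 * t * s * P * E -> Am <= E.
Proof.
  intros Hs HP Ht Hc Hlam HA1 Hg H.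
  assert (Hgain : 2 * s * (1 + t * (lam * P)) * A1 <= 2 * s * g * A1)
    by (apply Rmult_le_compat_r; [lra|]; apply Rmult_le_compat_l; lra).
  assert (Hcs : c * s <= 2 * A1 * s) by (apply Rmult_le_compat_r; lra).
  apply (Rmult_le_reg_l (2 * t * s * P)); [apply Rmult_lt_0_compat; [nra|lra]|].
  rewrite <- Hlam. nra.
Qed.

Section TaylorCoefficients.

Variables (f : C -> C) (c : R) (a : nat -> C) (rho r0 B : R).
Hypothesis Hser :
  forall z, Cmod z < rho -> is_series (V:=C_NormedModule) (fun n => a n * Cpow z n)%C (f z).
Hypotheses (Hr0 : 0 < r0) (Hr0rho : r0 < rho) (Hr0_1 : r0 <= 1) (HB : 0 <= B)
  (Hb : forall n, Cmod (a n) * r0 ^ n <= B).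
Hypothesis Hdiam : forall s z w, 0 < s < 1 -> Cmod z <= s -> Cmod w <= s -> Cmod (f z - f w) <= c * s.

Lemma diff_le_linear_part z w r : 0 < r <= r0 / 2 -> Cmod z < r -> Cmod w < r ->
  Cmod (f z - f w) <= 2 * Cmod (a 1%nat) * r + 4 * B * (r / r0) ^ 2.
Proof.
  intros Hr Hz Hw.
  assert (Hrem : forall y, Cmod y < r ->
    Cmod (f y - (a 0%nat + a 1%nat * y)) <= 2 * B * (r / r0) ^ 2).
  { intros y Hy.
    pose proof (power_series_remainder a r0 B Hr0 HB Hb y (f y) 2 ltac:(lra) (Hser y ltac:(lra))) as H.
    replace (fsum (fun n => a n * Cpow y n) 2)%C with (a 0%nat + a 1%nat * y)%C in H by (simpl; ring).
    eapply Rle_trans; [exact H|]. apply Rmult_le_compat_l; [lra|]. apply pow_incr.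
    pose proof (Cmod_ge_0 y). split; [apply Rdiv_le_0_compat|apply Rmult_le_compat_r]; try lra.
    left. apply Rinv_0_lt_compat. lra. }
  replace (f z - f w)%C with ((f z - (a 0%nat + a 1%nat * z)) + - (f w - (a 0%nat + a 1%nat * w))
    + a 1%nat * (z + - w))%C by ring.
  pose proof (Hrem z Hz). pose proof (Hrem w Hw).
  pose proof (Cmod_triangle z (- w)) as Hzw. rewrite Cmod_opp in Hzw.
  pose proof (Cmod_ge_0 (a 1%nat)).
  eapply Rle_trans; [apply Cmod_triangle|]. rewrite Cmod_mult.
  eapply Rle_trans; [apply Rplus_le_compat_r, Cmod_triangle|]. rewrite Cmod_opp.
  nra.
Qed.

Lemma coef1_lower_bound :
  (forall r eps, 0 < r < 1 -> 0 < eps ->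
    exists z w, Cmod z < r /\ Cmod w < r /\ c * r - eps < Cmod (f z - f w)) ->
  c <= 2 * Cmod (a 1%nat).
Proof.
  intros Hsup.
  apply (Rle_of_le_linear_small _ _ (1 + 4 * B / (r0 * r0)) (r0 / 2)); [lra|].
  intros r Hr.
  destruct (Hsup r (r * r) ltac:(lra) ltac:(nra)) as [z [w [Hz [Hw Hzw]]]].
  pose proof (diff_le_linear_part z w r Hr Hz Hw) as H.
  replace (4 * B * (r / r0) ^ 2) with (4 * B / (r0 * r0) * r * r) in H by (field; lra).
  apply (Rmult_le_reg_r r); [lra|]. nra.
Qed.

Lemma Cmod_coef_diff_le z w s n : 0 <= s -> Cmod z <= s -> Cmod w <= s ->
  Cmod (a n * Cpow z n - a n * Cpow w n) <= 2 * B * (s / r0) ^ n.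
Proof.
  intros Hs Hz Hw.
  assert (Hterm : forall y, Cmod y <= s -> Cmod (a n * Cpow y n) <= B * (s / r0) ^ n).
  { intros y Hy. rewrite Cmod_mult_pow. eapply Rle_trans.
    - apply Rmult_le_compat_l; [apply Cmod_ge_0|]. apply pow_incr. split; [apply Cmod_ge_0|exact Hy].
    - replace s with ((s / r0) * r0) at 1 by (field; lra).
      apply power_series_term_le; auto. apply Rdiv_le_0_compat; lra. }
  eapply Rle_trans; [apply Cmod_triangle|]. rewrite Cmod_opp.
  pose proof (Hterm z Hz). pose proof (Hterm w Hw). lra.
Qed.

Lemma leading_terms_bound z w s m K th :
  0 < s <= r0 / 2 -> Cmod z <= s -> Cmod w <= s -> 0 <= K -> 0 <= th <= / 2 -> (2 <= m)%nat ->
  (forall j, (j < m)%nat -> j <> 1%nat -> (a j * Cpow z j - a j * Cpow w j)%C = 0%C) ->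
  (forall n, (S m <= n)%nat -> Cmod (a n * Cpow z n - a n * Cpow w n) <= K * th ^ n) ->
  Cmod ((a 1%nat * Cpow z 1 - a 1%nat * Cpow w 1) + (a m * Cpow z m - a m * Cpow w m))
    <= c * s + 2 * K * th ^ S m.
Proof.
  intros Hs Hz Hw HK Hth Hm Hlow Htail.
  set (x := fun n => (a n * Cpow z n - a n * Cpow w n)%C).
  assert (Hx : is_series (V:=C_NormedModule) x (f z - f w)%C).
  { exact (is_series_minus _ _ _ _ (Hser z ltac:(lra)) (Hser w ltac:(lra))). }
  pose proof (Cmod_series_tail_le x _ (S m) K th HK Hth Hx Htail) as T.
  rewrite fsum_sparse in T by auto.
  pose proof (Hdiam s z w ltac:(lra) Hz Hw).
  change (Cmod (x 1%nat + x m) <= c * s + 2 * K * th ^ S m).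
  replace (x 1%nat + x m)%C with ((f z - f w) + - ((f z - f w) - (x 1%nat + x m)))%C by ring.
  eapply Rle_trans; [apply Cmod_triangle|]. rewrite Cmod_opp. lra.
Qed.

Lemma coef_odd_eq0 : a 1%nat <> 0%C -> c <= 2 * Cmod (a 1%nat) ->
  forall k, (1 <= k)%nat -> a (2 * k + 1)%nat = 0%C.
Proof.
  intros Ha1 Hc k.
  induction k as [k IH] using (well_founded_induction Wf_nat.lt_wf). intro Hk.
  destruct (Ceq_dec (a (2 * k + 1)%nat) 0) as [|Ham]; [assumption|].
  destruct (exists_unit_aligning (a 1%nat) _ (2 * k) Ha1 Ham ltac:(lia)) as [u [Hu Halign]].
  set (lam := Cmod (a (2 * k + 1)%nat) / Cmod (a 1%nat)) in Halign.
  assert (P1 : 0 < Cmod (a 1%nat)) by (apply Cmod_gt_0; auto).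
  assert (Hlam0 : 0 <= lam) by (apply Rdiv_le_0_compat; [apply Cmod_ge_0|lra]).
  apply Cmod_eq_0, Rle_antisym; [|apply Cmod_ge_0].
  apply (Rle_of_le_linear_small _ 0 (2 * B / r0 ^ (2 * k + 2)) (r0 / 2)); [lra|].
  intros s Hs. rewrite Rplus_0_l.
  assert (Hz : Cmod (RtoC s * u) = s) by (rewrite Cmod_mult, Cmod_R, Hu, Rabs_pos_eq; lra).
  assert (Hw : Cmod (- (RtoC s * u)) = s) by (rewrite Cmod_opp; auto).
  (* With [z = s u], even powers cancel in [f z - f (-z)]; odd ones below [2 k + 1] vanish by
     induction. *)
  assert (Hlow : forall j, (j < 2 * k + 1)%nat -> j <> 1%nat ->
    (a j * Cpow (RtoC s * u) j - a j * Cpow (- (RtoC s * u)) j)%C = 0%C).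
  { intros j Hj Hj1. destruct (Nat.Even_or_Odd j) as [[i ->]|[i ->]].
    - rewrite Cpow_opp_even. ring.
    - rewrite IH by lia. ring. }
  pose proof (leading_terms_bound _ _ s (2 * k + 1) (2 * B) (s / r0) Hs (Req_le _ _ Hz) (Req_le _ _ Hw)
    ltac:(lra) ltac:(apply Rdiv_le_half; lra) ltac:(lia) Hlow
    (fun n _ => Cmod_coef_diff_le _ _ s n ltac:(lra) (Req_le _ _ Hz) (Req_le _ _ Hw))) as L.
  rewrite (odd_pair_leading_terms _ _ _ s _ _ Halign), !Cmod_mult, Hu, Cmod_R, Rabs_pos_eq,
    Rmult_1_r in L
    by (pose proof (pow_le s (2 * k) ltac:(lra)); apply Rmult_le_pos; nra).
  apply (coef_le_of_leading_gain (Cmod (a 1%nat)) _ lam c (1 + lam * s ^ (2 * k)) s (s ^ (2 * k)) 1);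
    auto; try lra.
  - apply pow_lt. lra.
  - unfold lam. field. lra.
  - replace (2 * 1 * s * s ^ (2 * k) * (2 * B / r0 ^ (2 * k + 2) * s))
      with (2 * (2 * B) * (s / r0) ^ S (2 * k + 1)); [exact L|].
    unfold Rdiv. rewrite Rpow_mult_distr, pow_inv. replace (S (2 * k + 1)) with (2 * k + 2)%nat by lia.
    rewrite !pow_add. field. repeat split; try apply pow_nonzero; lra.
Qed.

Lemma coef_even_diff_le (u : C) (s phi : R) i : Cmod u = 1 -> 0 <= s -> 0 <= phi ->
  Cmod (a (2 * i)%nat * Cpow (RtoC s * u * cis phi) (2 * i)
        - a (2 * i)%nat * Cpow (- (RtoC s * u * cis (- phi))) (2 * i))
    <= 2 * B * phi * (2 * s / r0) ^ (2 * i).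
Proof.
  intros Hu Hs Hphi.
  set (n := (2 * i)%nat).
  replace (a n * Cpow (RtoC s * u * cis phi) n - a n * Cpow (- (RtoC s * u * cis (- phi))) n)%C
    with (a n * (Cpow (RtoC s * u * cis phi) n - Cpow (- (RtoC s * u * cis (- phi))) n))%C by ring.
  unfold n. rewrite Cpow_cis_sub_even. fold n.
  rewrite !Cmod_mult, Cmod_Ci, Cmod_pow, Hu, !Cmod_R, pow1, Rabs_pos_eq, Rabs_mult, (Rabs_pos_eq 2)
    by (try apply pow_le; lra).
  assert (Hsin : Rabs (sin (INR n * phi)) <= 2 ^ n * phi).
  { eapply Rle_trans; [apply Rabs_sin_le|].
    rewrite Rabs_mult, Rabs_pos_eq, (Rabs_pos_eq phi) by (try apply pos_INR; lra).
    apply Rmult_le_compat_r; [lra|apply INR_le_pow2]. }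
  assert (Hterm : Cmod (a n) * (2 * s) ^ n <= B * (2 * s / r0) ^ n).
  { replace (2 * s) with (2 * s / r0 * r0) at 1 by (field; lra).
    apply power_series_term_le; auto. apply Rdiv_le_0_compat; lra. }
  rewrite Rpow_mult_distr in Hterm.
  pose proof (Cmod_ge_0 (a n)). pose proof (pow_le s n Hs). pose proof (Rabs_pos (sin (INR n * phi))).
  pose proof (pow_le 2 n ltac:(lra)).
  assert (Cmod (a n) * s ^ n * (2 * Rabs (sin (INR n * phi)))
          <= Cmod (a n) * s ^ n * (2 * (2 ^ n * phi)))
    by (apply Rmult_le_compat_l; nra).
  nra.
Qed.

Lemma coef_rotated_diff_le (u : C) (s phi : R) n :
  (forall k, (1 <= k)%nat -> a (2 * k + 1)%nat = 0%C) ->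
  Cmod u = 1 -> 0 <= s -> 0 <= phi -> (2 <= n)%nat ->
  Cmod (a n * Cpow (RtoC s * u * cis phi) n - a n * Cpow (- (RtoC s * u * cis (- phi))) n)
    <= 2 * B * phi * (2 * s / r0) ^ n.
Proof.
  intros Hodd Hu Hs Hphi Hn. destruct (Nat.Even_or_Odd n) as [[i ->]|[i ->]].
  - apply coef_even_diff_le; lra.
  - rewrite Hodd by lia.
    replace (RtoC 0 * _ - RtoC 0 * _)%C with (RtoC 0) by ring. rewrite Cmod_0.
    apply Rmult_le_pos; [apply Rmult_le_pos | apply pow_le, Rdiv_le_0_compat]; lra.
Qed.

Lemma coef_even_le_linear (u : C) (lam s : R) k : (1 <= k)%nat -> c <= 2 * Cmod (a 1%nat) ->
  (forall k, (1 <= k)%nat -> a (2 * k + 1)%nat = 0%C) ->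
  (forall i, (1 <= i < k)%nat -> a (2 * i)%nat = 0%C) ->
  Cmod u = 1 -> (Ci * a (2 * k)%nat * Cpow u (2 * k - 1) = RtoC lam * a 1%nat)%C ->
  lam * Cmod (a 1%nat) = Cmod (a (2 * k)%nat) -> 0 < lam ->
  0 < s <= r0 / 4 -> s * (INR (2 * k) * lam + 1) <= 1 ->
  Cmod (a (2 * k)%nat) <= 2 * B * 2 ^ S (2 * k) / r0 ^ S (2 * k) * s.
Proof.
  intros Hk Hc Hodd Heven Hu Halign Hlam Hlam0 Hs Hsl.
  assert (HM : 2 <= INR (2 * k)) by (replace 2 with (INR 2) by reflexivity; apply le_INR; lia).
  (* With [z = s u e^(i phi)] and [w = - s u e^(-i phi)], the term [a (2 k) (z^(2 k) - w^(2 k))]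
     points along [a 1 u]; its gain [phi sin (2 k phi)] beats the loss [1 - cos phi] suffered by
     the linear term. *)
  set (phi := lam * s ^ (2 * k - 1)).
  assert (HP : 0 < s ^ (2 * k - 1)) by (apply pow_lt; lra).
  assert (Hsm1 : s ^ (2 * k - 1) <= s)
    by (replace (2 * k - 1)%nat with (S (2 * k - 2)) by lia; apply pow_succ_le_self; lra).
  assert (Hphi : 0 < phi) by (apply Rmult_lt_0_compat; lra).
  assert (Hmphi : INR (2 * k) * phi <= 1) by (unfold phi; nra).
  assert (Hz : Cmod (RtoC s * u * cis phi) = s)
    by (rewrite !Cmod_mult, Cmod_R, Hu, Cmod_cis, Rabs_pos_eq; lra).
  assert (Hw : Cmod (- (RtoC s * u * cis (- phi))) = s)
    by (rewrite Cmod_opp, !Cmod_mult, Cmod_R, Hu, Cmod_cis, Rabs_pos_eq; lra).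
  assert (Hlow : forall j, (j < 2 * k)%nat -> j <> 1%nat ->
    (a j * Cpow (RtoC s * u * cis phi) j - a j * Cpow (- (RtoC s * u * cis (- phi))) j)%C = 0%C).
  { intros j Hj Hj1. destruct (Nat.Even_or_Odd j) as [[[|i] ->]|[i ->]].
    - simpl. ring.
    - rewrite Heven by lia. ring.
    - rewrite Hodd by lia. ring. }
  pose proof (leading_terms_bound _ _ s (2 * k) (2 * B * phi) (2 * s / r0) ltac:(lra)
    (Req_le _ _ Hz) (Req_le _ _ Hw) ltac:(nra) ltac:(apply Rdiv_le_half; lra) ltac:(lia) Hlow
    (fun n Hn => coef_rotated_diff_le u s phi n Hodd Hu ltac:(lra) ltac:(lra) ltac:(lia))) as L.
  pose proof (cos_add_mul_sin_ge _ phi HM ltac:(lra) Hmphi) as Hg.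
  rewrite (even_pair_leading_terms _ _ _ s phi _ k Hk Halign) in L. fold phi in L.
  rewrite !Cmod_mult, Hu, Cmod_R, Rabs_pos_eq, Rmult_1_r in L by (apply Rmult_le_pos; nra).
  apply (coef_le_of_leading_gain (Cmod (a 1%nat)) _ lam c (cos phi + phi * sin (INR (2 * k) * phi))
    s (s ^ (2 * k - 1)) phi); auto; try lra.
  - apply Cmod_ge_0.
  - fold phi. nra.
  - replace (2 * phi * s * s ^ (2 * k - 1) * (2 * B * 2 ^ S (2 * k) / r0 ^ S (2 * k) * s))
      with (2 * (2 * B * phi) * (2 * s / r0) ^ S (2 * k)); [exact L|].
    unfold Rdiv. rewrite !Rpow_mult_distr, pow_inv.
    replace (S (2 * k)) with (S (S (2 * k - 1))) by lia. simpl pow.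
    field. split; [apply pow_nonzero|]; lra.
Qed.

Lemma coef_even_eq0 : a 1%nat <> 0%C -> c <= 2 * Cmod (a 1%nat) ->
  (forall k, (1 <= k)%nat -> a (2 * k + 1)%nat = 0%C) ->
  forall k, (1 <= k)%nat -> a (2 * k)%nat = 0%C.
Proof.
  intros Ha1 Hc Hodd k.
  induction k as [k IH] using (well_founded_induction Wf_nat.lt_wf). intro Hk.
  destruct (Ceq_dec (a (2 * k)%nat) 0) as [|Ham]; [assumption|].
  assert (HCam : (Ci * a (2 * k)%nat)%C <> 0%C) by (apply Cmult_neq_0; auto; apply Ci_nz).
  destruct (exists_unit_aligning (a 1%nat) _ (2 * k - 1) Ha1 HCam ltac:(lia)) as [u [Hu Halign]].
  rewrite Cmod_mult, Cmod_Ci, Rmult_1_l in Halign.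
  set (lam := Cmod (a (2 * k)%nat) / Cmod (a 1%nat)) in Halign.
  assert (P1 : 0 < Cmod (a 1%nat)) by (apply Cmod_gt_0; auto).
  assert (Hlam : 0 < lam) by (apply Rdiv_lt_0_compat; [apply Cmod_gt_0|]; auto).
  assert (HM : 0 <= INR (2 * k)) by apply pos_INR.
  set (d := Rmin (r0 / 4) (/ (INR (2 * k) * lam + 1))).
  assert (Hd : 0 < d) by (apply Rmin_pos; [lra | apply Rinv_0_lt_compat; nra]).
  apply Cmod_eq_0, Rle_antisym; [|apply Cmod_ge_0].
  apply (Rle_of_le_linear_small _ 0 (2 * B * 2 ^ S (2 * k) / r0 ^ S (2 * k)) d Hd).
  intros s Hs. rewrite Rplus_0_l.
  destruct (Rle_Rmin_inv s (r0 / 4) (INR (2 * k) * lam + 1) ltac:(nra) ltac:(unfold d in Hs; lra))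
    as [Hs1 Hsl].
  apply (coef_even_le_linear u lam s k); auto; try lra.
  - intros i Hi. apply IH; lia.
  - unfold lam. field. lra.
Qed.

Lemma coef_high_eq0 : a 1%nat <> 0%C -> c <= 2 * Cmod (a 1%nat) ->
  forall n, (2 <= n)%nat -> a n = 0%C.
Proof.
  intros Ha1 Hc n Hn.
  pose proof (coef_odd_eq0 Ha1 Hc) as Hodd.
  destruct (Nat.Even_or_Odd n) as [[i ->]|[i ->]]; [apply coef_even_eq0 | apply Hodd]; auto; lia.
Qed.

End TaylorCoefficients.

Lemma Cmult_reg_r (x y z : C) : (x * z = y * z)%C -> z <> 0%C -> x = y.
Proof.
  intros H Hz. replace x with (x * z / z)%C by (field; auto). rewrite H. field. auto.
Qed.

Lemma affine_near_of_affine_on_segment (f : C -> C) (p d a0 a1 : C) eps :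
  analytic_at f p -> d <> 0%C -> 0 < eps ->
  (forall s, 0 < s < eps -> f (p + RtoC s * d)%C = (a0 + a1 * (p + RtoC s * d))%C) ->
  exists r, 0 < r /\ forall y, Cmod (y - p) < r -> f y = (a0 + a1 * y)%C.
Proof.
  intros [b [rb [Hrb Hb]]] Hd He Hseg.
  assert (Pd : 0 < Cmod d) by (apply Cmod_gt_0; auto).
  assert (Hdn : forall n, Cpow d n <> 0%C) by (intro; apply Cpow_nz; auto).
  destruct (power_series_affine_coef (fun n => b n * Cpow d n)%C (Rmin eps (rb / Cmod d))
    (a0 + a1 * p) (a1 * d)) as [U0 [U1 U2]].
  { apply Rmin_pos; [lra | apply Rdiv_lt_0_compat; lra]. }
  { intros s Hs.
    assert (Hsr : s * Cmod d < rb).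
    { assert (H : s < rb / Cmod d) by (pose proof (Rmin_r eps (rb / Cmod d)); lra).
      apply (Rmult_lt_compat_r (Cmod d)) in H; [|lra].
      replace (rb / Cmod d * Cmod d) with rb in H by (field; lra). exact H. }
    assert (Hy : Cmod (p + RtoC s * d - p) < rb).
    { replace (p + RtoC s * d - p)%C with (RtoC s * d)%C by ring.
      rewrite Cmod_mult, Cmod_R, Rabs_pos_eq; lra. }
    pose proof (Hb _ Hy) as S.
    rewrite Hseg in S by (pose proof (Rmin_l eps (rb / Cmod d)); lra).
    replace (a0 + a1 * (p + RtoC s * d))%C with (a0 + a1 * p + a1 * d * RtoC s)%C in S by ring.
    eapply is_series_ext; [|exact S]. intro n. simpl.
    rewrite pow_n_Cpow. replace (p + RtoC s * d - p)%C with (RtoC s * d)%C by ring.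
    rewrite Cpow_mult_l. ring. }
  assert (Hb1 : b 1%nat = a1).
  { apply (Cmult_reg_r _ _ d); auto. rewrite <- U1. simpl. ring. }
  assert (Hb2 : forall n, (2 <= n)%nat -> b n = 0%C).
  { intros n Hn. apply (Cmult_reg_r _ _ (Cpow d n)); auto. rewrite U2 by auto. ring. }
  exists rb. split; auto. intros y Hy.
  assert (Htail : forall n, (2 <= n)%nat -> (b n * pow_n (y - p)%C n)%C = 0%C)
    by (intros n Hn; rewrite Hb2 by exact Hn; apply Cmult_0_l).
  rewrite (is_series_finite _ 2 _ Htail (Hb y Hy)).
  simpl in U0 |- *. rewrite Hb1. rewrite Cmult_1_r in U0. rewrite U0.
  change (@one C_Ring) with (RtoC 1). change (@mult C_Ring) with Cmult. ring.
Qed.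

Lemma real_induction_unit_interval (Q : R -> Prop) :
  (forall T, 0 <= T <= 1 -> (forall s, 0 <= s < T -> Q s) ->
    exists e, 0 < e /\ forall s, 0 <= s -> Rabs (s - T) < e -> Q s) ->
  forall t, 0 <= t <= 1 -> Q t.
Proof.
  intros Hstep.
  set (E := fun t => 0 <= t <= 1 /\ forall s, 0 <= s <= t -> Q s).
  assert (E0 : E 0).
  { split; [lra|]. intros s Hs. replace s with 0 by lra.
    destruct (Hstep 0 ltac:(lra) ltac:(intros; lra)) as [e [He HQ]].
    apply HQ; [lra|]. rewrite Rminus_0_r, Rabs_R0. exact He. }
  assert (Eb : bound E) by (exists 1; intros t [Ht _]; lra).
  destruct (completeness E Eb (ex_intro _ 0 E0)) as [T [HTub HTlub]].
  assert (HT : 0 <= T <= 1) by (split; [apply HTub; auto | apply HTlub; intros t [Ht _]; lra]).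
  assert (Hbelow : forall s, 0 <= s < T -> Q s).
  { intros s Hs. destruct (classic (exists t, E t /\ s < t)) as [[t [[_ Ht] Hst]]|N].
    - apply Ht. lra.
    - assert (T <= s); [|lra].
      apply HTlub. intros t Et. destruct (Rle_lt_dec t s); auto. exfalso. eauto. }
  destruct (Hstep T HT Hbelow) as [e [He Hnear]].
  assert (HQ : forall s, 0 <= s <= Rmin 1 (T + e / 2) -> Q s).
  { intros s Hs. pose proof (Rmin_r 1 (T + e / 2)).
    destruct (Rlt_le_dec s T); [apply Hbelow; lra|].
    apply Hnear; [lra|]. rewrite Rabs_pos_eq; lra. }
  assert (HT1 : T = 1).
  { destruct (Rlt_le_dec T 1) as [HT1|]; [|lra].
    assert (Rmin 1 (T + e / 2) <= T); [|pose proof (Rmin_glb_lt 1 (T + e / 2) T); lra].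
    apply HTub. split; [split; [apply Rmin_glb | apply Rmin_l]; lra | exact HQ]. }
  intros t Ht. apply HQ. split; [lra|]. rewrite HT1. apply Rmin_glb; lra.
Qed.

Lemma affine_on_disk_of_affine_near0 (f : C -> C) (a0 a1 : C) rho :
  analytic_on_disk f -> 0 < rho ->
  (forall z, Cmod z < rho -> f z = (a0 + a1 * z)%C) ->
  forall z, Cmod z < 1 -> f z = (a0 + a1 * z)%C.
Proof.
  intros Han Hrho Hloc z Hz.
  destruct (Ceq_dec z 0) as [->|Ez]; [apply Hloc; rewrite Cmod_0; lra|].
  assert (Pz : 0 < Cmod z) by (apply Cmod_gt_0; auto).
  assert (Hmod : forall t, Cmod (RtoC t * z) = Rabs t * Cmod z)
    by (intro; rewrite Cmod_mult, Cmod_R; auto).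
  replace z with (RtoC 1 * z)%C by ring.
  apply (real_induction_unit_interval (fun t => f (RtoC t * z)%C = (a0 + a1 * (RtoC t * z))%C));
    [|lra].
  intros T HT Hbelow.
  assert (Hball : forall r, 0 < r -> (forall y, Cmod (y - RtoC T * z) < r -> f y = (a0 + a1 * y)%C) ->
    exists e, 0 < e /\ forall s, 0 <= s -> Rabs (s - T) < e ->
      f (RtoC s * z)%C = (a0 + a1 * (RtoC s * z))%C).
  { intros r Hr Hf. exists (r / Cmod z). split; [apply Rdiv_lt_0_compat; lra|].
    intros s _ Hs. apply Hf.
    replace (RtoC s * z - RtoC T * z)%C with (RtoC (s - T) * z)%C by (rewrite RtoC_minus; ring).
    rewrite Hmod. apply (Rmult_lt_compat_r (Cmod z)) in Hs; [|lra].
    replace (r / Cmod z * Cmod z) with r in Hs by (field; lra). exact Hs. }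
  destruct (Req_dec T 0) as [HT0|HT0].
  - apply (Hball rho Hrho). intros y Hy. apply Hloc.
    replace y with (y - RtoC T * z)%C; auto. rewrite HT0. ring.
  - destruct (affine_near_of_affine_on_segment f (RtoC T * z) (- z) a0 a1 T) as [r [Hr Hf]].
    + apply Han. rewrite Hmod, Rabs_pos_eq by lra. nra.
    + intro H. apply Ez. replace z with (- - z)%C by ring. rewrite H. ring.
    + lra.
    + intros s Hs. replace (RtoC T * z + RtoC s * - z)%C with (RtoC (T - s) * z)%C
        by (rewrite RtoC_minus; ring).
      apply Hbelow. lra.
    + exact (Hball r Hr Hf).
Qed.

Section Diameter.

Variables (f : C -> C) (c r : R).
Hypothesis Hdiam : diam_image_disk f r = Finite (c * r).

Let diffs := fun d : R => exists z w : C, Cmod z < r /\ Cmod w < r /\ d = Cmod (f z - f w)%C.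

Lemma diam_image_disk_le z w : Cmod z < r -> Cmod w < r -> Cmod (f z - f w) <= c * r.
Proof.
  intros Hz Hw. destruct (Lub_Rbar_correct diffs) as [Hub _].
  unfold diam_image_disk in Hdiam. fold diffs in Hdiam. rewrite Hdiam in Hub.
  apply (Hub (Cmod (f z - f w))). exists z, w. auto.
Qed.

Lemma diam_image_disk_approx eps : 0 < eps ->
  exists z w, Cmod z < r /\ Cmod w < r /\ c * r - eps < Cmod (f z - f w).
Proof.
  intro He. destruct (Lub_Rbar_correct diffs) as [_ Hlub].
  unfold diam_image_disk in Hdiam. fold diffs in Hdiam. rewrite Hdiam in Hlub.
  apply NNPP. intro N.
  assert (Rbar_le (c * r) (c * r - eps)); [|simpl in *; lra].
  apply Hlub. intros d [z [w [Hz [Hw ->]]]]. simpl.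
  apply Rnot_lt_le. intro. apply N. exists z, w. auto.
Qed.

End Diameter.

Lemma diam_le_closed_disk (f : C -> C) (c : R) :
  (forall r, 0 < r < 1 -> diam_image_disk f r = Finite (c * r)) ->
  forall s z w, 0 < s < 1 -> Cmod z <= s -> Cmod w <= s -> Cmod (f z - f w) <= c * s.
Proof.
  intros Hd s z w Hs Hz Hw.
  apply (Rle_of_le_linear_small _ _ c ((1 - s) / 2)); [lra|]. intros t Ht.
  rewrite <- Rmult_plus_distr_l.
  apply (diam_image_disk_le f c (s + t)); [apply Hd | |]; lra.
Qed.

Lemma const_of_diam_le_nonpos (f : C -> C) (c : R) : c <= 0 ->
  (forall s z w, 0 < s < 1 -> Cmod z <= s -> Cmod w <= s -> Cmod (f z - f w) <= c * s) ->
  forall z, Cmod z < 1 -> f z = (f 0 + 0 * z)%C.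
Proof.
  intros Hc Hdiam z Hz.
  pose proof (Cmod_ge_0 z) as Hz0.
  pose proof (Hdiam ((Cmod z + 1) / 2) z 0%C) as H. rewrite Cmod_0 in H.
  specialize (H ltac:(lra) ltac:(lra) ltac:(lra)).
  apply Ceq_minus, Cmod_eq_0.
  replace (f z - (f 0 + 0 * z))%C with (f z - f 0)%C by ring.
  pose proof (Cmod_ge_0 (f z - f 0)). nra.
Qed.

Lemma analytic_at0_series (f : C -> C) : analytic_at f 0 ->
  exists (a : nat -> C) (rho : R), 0 < rho /\
    forall z, Cmod z < rho -> is_series (V:=C_NormedModule) (fun n => a n * Cpow z n)%C (f z).
Proof.
  intros [a [rho [Hrho Ha]]]. exists a, rho. split; auto. intros z Hz.
  assert (Hz0 : Cmod (z - 0) < rho) by (replace (z - 0)%C with z by ring; exact Hz).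
  pose proof (Ha z Hz0) as S. replace (z - 0)%C with z in S by ring.
  eapply is_series_ext; [|exact S]. intro n. simpl. rewrite pow_n_Cpow. reflexivity.
Qed.

Lemma affine_of_high_coef_eq0 (f : C -> C) (a : nat -> C) rho :
  (forall z, Cmod z < rho -> is_series (V:=C_NormedModule) (fun n => a n * Cpow z n)%C (f z)) ->
  (forall n, (2 <= n)%nat -> a n = 0%C) ->
  forall z, Cmod z < rho -> f z = (a 0%nat + a 1%nat * z)%C.
Proof.
  intros Hser Hhigh z Hz. rewrite (is_series_finite (fun n => a n * Cpow z n)%C 2 (f z)).
  - simpl. ring.
  - intros n Hn. rewrite Hhigh by exact Hn. ring.
  - exact (Hser z Hz).
Qed.

Theorem corollary4 (f : C -> C) (c : R) :
  analytic_on_disk f ->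
  0 <= c ->
  (forall r : R, 0 < r < 1 -> diam_image_disk f r = Finite (c * r)) ->
  exists a b : C, forall z : C, Cmod z < 1 -> f z = (a + b * z)%C.
Proof.
  intros Han _ Hd.
  pose proof (diam_le_closed_disk f c Hd) as Hdiam.
  destruct (analytic_at0_series f (Han 0%C ltac:(rewrite Cmod_0; lra))) as [a [rho [Hrho Hser]]].
  set (r0 := Rmin rho 1 / 2).
  assert (Hr0 : 0 < r0) by (apply Rdiv_lt_0_compat; [apply Rmin_pos|]; lra).
  assert (Hr0rho : r0 < rho) by (pose proof (Rmin_l rho 1); unfold r0; lra).
  assert (Hr0_1 : r0 <= 1) by (pose proof (Rmin_r rho 1); unfold r0; lra).
  destruct (power_series_coef_bounded a r0 _ Hr0 (Hser r0 ltac:(rewrite Cmod_R, Rabs_pos_eq; lra)))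
    as [B [HB Hb]].
  assert (Hc1 : c <= 2 * Cmod (a 1%nat)).
  { apply (coef1_lower_bound f c a rho r0 B); auto.
    intros r eps Hr He. exact (diam_image_disk_approx f c r (Hd r Hr) eps He). }
  destruct (Ceq_dec (a 1%nat) 0) as [A1|A1].
  - rewrite A1, Cmod_0 in Hc1.
    exists (f 0%C), 0%C. apply (const_of_diam_le_nonpos f c); auto. lra.
  - exists (a 0%nat), (a 1%nat).
    apply (affine_on_disk_of_affine_near0 f _ _ rho Han Hrho).
    apply (affine_of_high_coef_eq0 f a rho Hser).
    exact (coef_high_eq0 f c a rho r0 B Hser Hr0 Hr0rho Hr0_1 HB Hb Hdiam A1 Hc1).
Qed.
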